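(* Let $A$ be a self-adjoint operator in a separable Hilbert space $\mathfrak H$, let $U=(A+iI)(A-iI)^{-1}$ be its Cayley transform, and let $\mathcal L\neq\{0\}$ be a closed subspace of $\mathfrak H$. Let $$S_{\mathcal L}=A\upharpoonright_{\mathcal D(S_{\mathcal L})},\qquad \mathcal D(S_{\mathcal L})=\{u\in\mathcal D(A):((A-iI)u,\gamma)=0\ \ \forall\gamma\in\mathcal L\}.$$ Then the following are equivalent: (i) $S_{\mathcal L}$ is a Phillips symmetric operator (in particular, densely defined); (ii) $\mathcal L$ is a wandering subspace of $U$, i.e. $U^n\mathcal L\perp\mathcal L$ for all $n\in\mathbb N$.
   Context: A closed densely defined symmetric operator $S$ with equal nonzero defect numbers is a Phillips symmetric operator (PSO) if its characteristic function is constant on $\mathbb C_+$; here, given a boundary triplet $(\mathcal H,\Gamma_-,\Gamma_+)$ of $S^*$ (i.e. $\Gamma_\pm:\mathcal D(S^* )\to\mathcal H$ linear, $(S^*f,g)-(f,S^*g)=i[(\Gamma_+f,\Gamma_+g)-(\Gamma_-f,\Gamma_-g)]$, $(\Gamma_-,\Gamma_+)$ surjective onto $\mathcal H\oplus\mathcal H$), the characteristic function $\Theta(\lambda)$, $\lambda\in\mathbb C_+$, is the bounded operator in $\mathcal H$ with $\mathcal D(S)\dotplus\ker(S^*-\lambda I)=\{f\in\mathcal D(S^* ):\Theta(\lambda)\Gamma_+f=\Gamma_-f\}$. Equivalently (and usable as the definition here), $S$ is a PSO iff $\ker(S^*-\lambda I)\perp\ker(S^*-\nu I)$ for all $\lambda\in\mathbb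 C_+,\nu\in\mathbb C_-$. *)

From Stdlib Require Import Reals.
Open Scope R_scope.

Record C := mkC { Re : R ; Im : R }.
Definition C0 : C := mkC 0 0.
Definition C1 : C := mkC 1 0.
Definition Ci : C := mkC 0 1.
Definition Cadd (a b : C) : C := mkC (Re a + Re b) (Im a + Im b).
Definition Cmul (a b : C) : C :=
  mkC (Re a * Re b - Im a * Im b) (Re a * Im b + Im a * Re b).
Definition Copp (a : C) : C := mkC (- Re a) (- Im a).
Definition Cconj (a : C) : C := mkC (Re a) (- Im a).

Record HOps := {
  car :> Type ;
  hzero : car ;
  hadd : car -> car -> car ;
  hopp : car -> car ;
  hscal : C -> car -> car ;
  inner : car -> car -> C   (* linear in the first argument *)
}.

Section HDefs.
Variable H : HOps.

Definition hsub (x y : H) : H := hadd H x (hopp H y).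
Definition hnorm (x : H) : R := sqrt (Re (inner H x x)).

Definition converges (u : nat -> H) (l : H) : Prop :=
  Un_cv (fun n => hnorm (hsub (u n) l)) 0.
Definition cauchy (u : nat -> H) : Prop :=
  forall eps, 0 < eps -> exists N, forall n m, (N <= n)%nat -> (N <= m)%nat ->
    hnorm (hsub (u n) (u m)) < eps.

Definition dense (P : H -> Prop) : Prop :=
  forall x eps, 0 < eps -> exists y, P y /\ hnorm (hsub x y) < eps.
Definition linear_subspace (P : H -> Prop) : Prop :=
  P (hzero H) /\ (forall x y, P x -> P y -> P (hadd H x y)) /\
  (forall a x, P x -> P (hscal H a x)).
Definition closed_subset (P : H -> Prop) : Prop :=
  forall u l, (forall n, P (u n)) -> converges u l -> P l.
Definition orth (P Q : H -> Prop) : Prop :=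
  forall x y, P x -> Q y -> inner H x y = C0.

Definition is_hilbert : Prop :=
  (forall x y z, hadd H x (hadd H y z) = hadd H (hadd H x y) z) /\
  (forall x y, hadd H x y = hadd H y x) /\
  (forall x, hadd H x (hzero H) = x) /\
  (forall x, hadd H x (hopp H x) = hzero H) /\
  (forall a b x, hscal H a (hscal H b x) = hscal H (Cmul a b) x) /\
  (forall x, hscal H C1 x = x) /\
  (forall a x y, hscal H a (hadd H x y) = hadd H (hscal H a x) (hscal H a y)) /\
  (forall a b x, hscal H (Cadd a b) x = hadd H (hscal H a x) (hscal H b x)) /\
  (forall x y z, inner H (hadd H x y) z = Cadd (inner H x z) (inner H y z)) /\
  (forall a x y, inner H (hscal H a x) y = Cmul a (inner H x y)) /\
  (forall x y, inner H y x = Cconj (inner H x y)) /\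
  (forall x, 0 <= Re (inner H x x)) /\
  (forall x, inner H x x = C0 -> x = hzero H) /\
  (forall u, cauchy u -> exists l, converges u l) /\
  (exists d : nat -> H, dense (fun x => exists n, x = d n)).

Record Op := { dom : H -> Prop ; app : H -> H }.

Definition linear_op (T : Op) : Prop :=
  linear_subspace (dom T) /\
  (forall x y, dom T x -> dom T y -> app T (hadd H x y) = hadd H (app T x) (app T y)) /\
  (forall a x, dom T x -> app T (hscal H a x) = hscal H a (app T x)).
Definition densely_defined (T : Op) : Prop := dense (dom T).
Definition symmetric (T : Op) : Prop :=
  forall x y, dom T x -> dom T y -> inner H (app T x) y = inner H x (app T y).
Definition closed_op (T : Op) : Prop :=
  forall u x y, (forall n, dom T (u n)) -> converges u x ->
    converges (fun n => app T (u n)) y -> dom T x /\ app T x = y.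

(* graph of the adjoint:  adj_rel T y z  <->  y in dom(adj T) and (adj T) y = z
   (meaningful for densely defined T) *)
Definition adj_rel (T : Op) (y z : H) : Prop :=
  forall x, dom T x -> inner H (app T x) y = inner H x z.

Definition self_adjoint (A : Op) : Prop :=
  linear_op A /\ densely_defined A /\
  forall y z, adj_rel A y z <-> (dom A y /\ z = app A y).

(* U is the Cayley transform (A + iI)(A - iI)^{-1} of A; for self-adjoint A,
   A - iI maps D(A) bijectively onto H, so this determines U : H -> H. *)
Definition is_cayley (A : Op) (U : H -> H) : Prop :=
  forall u, dom A u ->
    U (hsub (app A u) (hscal H Ci u)) = hadd H (app A u) (hscal H Ci u).

Definition defect (T : Op) (lam : C) (y : H) : Prop := adj_rel T y (hscal H lam y).

(* equal nonzero defect numbers: ker(adj T - iI) is nonzero and has the same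
   Hilbert dimension as ker(adj T + iI), i.e. they are unitarily isomorphic *)
Definition equal_nonzero_defects (T : Op) : Prop :=
  (exists y, defect T Ci y /\ y <> hzero H) /\
  exists V : H -> H,
    (forall x, defect T Ci x -> defect T (Copp Ci) (V x)) /\
    (forall x y, defect T Ci x -> defect T Ci y -> inner H (V x) (V y) = inner H x y) /\
    (forall y, defect T (Copp Ci) y -> exists x, defect T Ci x /\ V x = y).

Definition is_PSO (S : Op) : Prop :=
  linear_op S /\ densely_defined S /\ symmetric S /\ closed_op S /\
  equal_nonzero_defects S /\
  forall lam nu, 0 < Im lam -> Im nu < 0 -> orth (defect S lam) (defect S nu).

Definition S_L (A : Op) (L : H -> Prop) : Op :=
  {| dom := fun u => dom A u /\
        forall g, L g -> inner H (hsub (app A u) (hscal H Ci u)) g = C0 ;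
     app := app A |}.

Definition wandering (U : H -> H) (L : H -> Prop) : Prop :=
  forall n : nat, (1 <= n)%nat ->
    orth (fun x => exists y, L y /\ x = Nat.iter n U y) L.

End HDefs.

Record Hilbert := { hops :> HOps ; hilbert_ax : is_hilbert hops }.

(* A is self-adjoint, so A - ibI maps D(A) onto H for every real b <> 0 and the Cayley
   transform U is unitary. For S = S_L one gets ker(S* + iI) = L and ker(S* - iI) = U L,
   so the defect numbers are equal and nonzero.

   If L is wandering: a vector orthogonal to D(S) has the form (A + iI)u with u in L and
   (U - I)(A - iI)u = 2iu, so the pairwise orthogonal sum u + Uu + ... + U^(n-1)u has norm
   sqrt n |u| and stays bounded; hence u = 0 and S is densely defined. For z in
   ker(S* - nu I), Im nu < 0, pairing with (A - iI)x in U^m L gives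
   (conj nu + i) <U^m g, z> = (conj nu - i) <U^(m+1) g, z>, a bounded sequence with
   ratio of modulus < 1, hence zero; the same recurrence run backwards along U^-j z
   gives the orthogonality of ker(S* - lam I) and ker(S* - nu I).

   Conversely, for 0 < s < 1 solve p - s U p = g (g in L) with U p in
   ker(S* - mu I), mu = i(1 + s)/(1 - s). Then U p is orthogonal to L = ker(S* + iI), and
   U^j p = U^j g + s U^(j+1) p gives, by induction on j, U^j p orthogonal to L and
   |<U^j g, g'>| <= 2 s |g| |g'| for every small s. *)

From Pilot Require Import Defs.
From Stdlib Require Import Reals Lra Lia Psatz ZArith Classical ClassicalEpsilon.
Import Defs.
Open Scope R_scope.

Lemma C_ext (a b : C) : Re a = Re b -> Im a = Im b -> a = b.
Proof. destruct a, b; simpl; intros; subst; reflexivity. Qed.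

Ltac csimpl := cbn [Re Im Cadd Cmul Copp Cconj C0 C1 Ci] in *.
Ltac ceq := apply C_ext; csimpl; ring.
Ltac cparts h := pose proof (f_equal Re h); pose proof (f_equal Im h).
Ltac ceq_from h := apply C_ext; cparts h; csimpl; nra.

Definition cmod2 (c : C) : R := Re c * Re c + Im c * Im c.
Definition cmod (c : C) : R := sqrt (cmod2 c).

Lemma cmod2_ge0 c : 0 <= cmod2 c.
Proof. unfold cmod2; nra. Qed.

Lemma cmod2_mul a b : cmod2 (Cmul a b) = cmod2 a * cmod2 b.
Proof. unfold cmod2; csimpl; ring. Qed.

Lemma cmod2_eq0 c : cmod2 c = 0 -> c = C0.
Proof. unfold cmod2; intros h; apply C_ext; csimpl; nra. Qed.

Lemma cmod_ge0 c : 0 <= cmod c.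
Proof. apply sqrt_pos. Qed.

Lemma cmod_sq c : cmod c * cmod c = cmod2 c.
Proof. apply sqrt_sqrt, cmod2_ge0. Qed.

Lemma cmod_mul a b : cmod (Cmul a b) = cmod a * cmod b.
Proof. unfold cmod; rewrite cmod2_mul; apply sqrt_mult; apply cmod2_ge0. Qed.

Lemma cmod_opp a : cmod (Copp a) = cmod a.
Proof. unfold cmod, cmod2; csimpl; f_equal; ring. Qed.

Lemma cmod_real r : cmod (mkC r 0) = Rabs r.
Proof.
  unfold cmod, cmod2; csimpl; rewrite <- sqrt_Rsqr_abs; unfold Rsqr; f_equal; ring.
Qed.

Lemma cmod_le_of_sq (c : C) (r : R) : 0 <= r -> cmod2 c <= r * r -> cmod c <= r.
Proof. intros h1 h2. pose proof (cmod_ge0 c). pose proof (cmod_sq c). nra. Qed.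

Lemma Re_le_cmod c : Re c <= cmod c.
Proof.
  pose proof (cmod_ge0 c); pose proof (cmod_sq c); unfold cmod2 in *.
  destruct (Rle_lt_dec (Re c) 0); nra.
Qed.

Lemma cmod_add a b : cmod (Cadd a b) <= cmod a + cmod b.
Proof.
  pose proof (cmod_ge0 a); pose proof (cmod_ge0 b).
  apply cmod_le_of_sq; [lra|].
  pose proof (cmod_sq a); pose proof (cmod_sq b).
  pose proof (sqrt_cauchy (Re a) (Im a) (Re b) (Im b)).
  unfold cmod, cmod2, Rsqr in *; csimpl. nra.
Qed.

Lemma cmod_small_eq0 c : (forall eps, 0 < eps -> cmod c < eps) -> c = C0.
Proof.
  intros h. apply cmod2_eq0. rewrite <- cmod_sq.
  destruct (Rle_lt_or_eq_dec 0 (cmod c) (cmod_ge0 c)) as [hl|<-]; [|ring].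
  specialize (h _ hl). lra.
Qed.

(* [a 0 = r^m a m] with [r < 1] and [a] bounded. *)
Lemma bounded_contracting_seq_eq0 (a : nat -> R) (r B : R) :
  0 <= r < 1 -> (forall k, 0 <= a k) -> (forall k, a k <= B) ->
  (forall k, a k = r * a (S k)) -> a 0%nat = 0.
Proof.
  intros hr ha hb hrec.
  assert (hm : forall m, a 0%nat = r ^ m * a m).
  { induction m; [simpl; ring|]. rewrite IHm, hrec; simpl; ring. }
  destruct (Rle_lt_or_eq_dec 0 (a 0%nat) (ha 0%nat)) as [hl|he]; auto.
  exfalso.
  assert (hB : 0 < B) by (pose proof (hb 0%nat); lra).
  destruct (pow_lt_1_zero r ltac:(rewrite Rabs_right; lra) (a 0%nat / B)
              ltac:(apply Rdiv_lt_0_compat; lra)) as [n hn].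
  specialize (hn n (le_n _)). rewrite Rabs_right in hn by (apply Rle_ge, pow_le; lra).
  apply (Rmult_lt_compat_r B) in hn; [|lra].
  unfold Rdiv in hn. rewrite Rmult_assoc, Rinv_l, (hm n) in hn by lra.
  pose proof (hb n); pose proof (ha n); pose proof (pow_le r n ltac:(lra)). nra.
Qed.

Lemma bounded_ratio_seq_eq0 (e : nat -> C) (c d : C) (B : R) :
  cmod2 d < cmod2 c -> (forall k, cmod2 (e k) <= B) ->
  (forall k, Cmul c (e k) = Cmul d (e (S k))) -> e 0%nat = C0.
Proof.
  intros hcd hb hrec. apply cmod2_eq0.
  pose proof (cmod2_ge0 d).
  apply (bounded_contracting_seq_eq0 (fun k => cmod2 (e k)) (cmod2 d / cmod2 c) B).
  - split; [apply Rmult_le_pos; [lra|left; apply Rinv_0_lt_compat; lra]|].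
    apply (Rmult_lt_reg_r (cmod2 c)); [lra|].
    unfold Rdiv; rewrite Rmult_assoc, Rinv_l; lra.
  - intros; apply cmod2_ge0.
  - exact hb.
  - intros k. pose proof (f_equal cmod2 (hrec k)) as h. rewrite !cmod2_mul in h.
    field_simplify; [|lra]. rewrite <- h. field. lra.
Qed.

Lemma inv_succ_small d : 0 < d -> exists K, forall n, (K <= n)%nat -> / (INR n + 1) < d.
Proof.
  intros hd. destruct (archimed (/ d)) as [h1 _].
  pose proof (Rinv_0_lt_compat d hd).
  assert (0 <= up (/ d))%Z by (apply le_IZR; lra).
  exists (Z.to_nat (up (/ d))). intros n hn.
  apply le_INR in hn. rewrite INR_IZR_INZ, Z2Nat.id in hn by assumption.
  rewrite <- (Rinv_inv d). apply Rinv_lt_contravar; [|lra].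
  pose proof (pos_INR n). apply Rmult_lt_0_compat; lra.
Qed.

Lemma le_of_le_add_eps a b : (forall eta, 0 < eta -> a <= b + eta) -> a <= b.
Proof. intros h. destruct (Rle_lt_dec a b); auto. specialize (h ((a - b) / 2)). lra. Qed.

Section Hilbert.
Variable H : HOps.
Hypothesis HH : is_hilbert H.

Notation hadd := (hadd H).
Notation hopp := (hopp H).
Notation hscal := (hscal H).
Notation hsub := (hsub H).
Notation hzero := (hzero H).
Notation ip := (inner H).
Notation hnorm := (hnorm H).

Lemma hadd_assoc x y z : hadd x (hadd y z) = hadd (hadd x y) z.
Proof. destruct HH as (h&_); auto. Qed.
Lemma hadd_comm x y : hadd x y = hadd y x.
Proof. destruct HH as (_&h&_); auto. Qed.
Lemma hadd_0 x : hadd x hzero = x.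
Proof. destruct HH as (_&_&h&_); auto. Qed.
Lemma hadd_opp x : hadd x (hopp x) = hzero.
Proof. destruct HH as (_&_&_&h&_); auto. Qed.
Lemma ip_addl x y z : ip (hadd x y) z = Cadd (ip x z) (ip y z).
Proof. destruct HH as (_&_&_&_&_&_&_&_&h&_); auto. Qed.
Lemma ip_scall a x y : ip (hscal a x) y = Cmul a (ip x y).
Proof. destruct HH as (_&_&_&_&_&_&_&_&_&h&_); auto. Qed.
Lemma ip_conj x y : ip y x = Cconj (ip x y).
Proof. destruct HH as (_&_&_&_&_&_&_&_&_&_&h&_); auto. Qed.
Lemma ip_self_Re_ge0 x : 0 <= Re (ip x x).
Proof. destruct HH as (_&_&_&_&_&_&_&_&_&_&_&h&_); auto. Qed.
Lemma ip_self_eq0 x : ip x x = C0 -> x = hzero.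
Proof. destruct HH as (_&_&_&_&_&_&_&_&_&_&_&_&h&_); auto. Qed.
Lemma hilbert_complete u : cauchy H u -> exists l, converges H u l.
Proof. destruct HH as (_&_&_&_&_&_&_&_&_&_&_&_&_&h&_); auto. Qed.

Lemma hadd_oppl x : hadd (hopp x) x = hzero.
Proof. rewrite hadd_comm; apply hadd_opp. Qed.

Lemma hsub_eq0 x y : hsub x y = hzero -> x = y.
Proof.
  unfold hsub; intros h.
  rewrite <- (hadd_0 x), <- (hadd_oppl y), hadd_assoc, h, hadd_comm, hadd_0.
  reflexivity.
Qed.

Lemma ip_addr x y z : ip x (hadd y z) = Cadd (ip x y) (ip x z).
Proof. rewrite (ip_conj (hadd y z)), ip_addl, (ip_conj x y), (ip_conj x z). ceq. Qed.
Lemma ip_scalr a x y : ip x (hscal a y) = Cmul (Cconj a) (ip x y).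
Proof. rewrite (ip_conj (hscal a y)), ip_scall, (ip_conj x y). ceq. Qed.

Lemma ip_0l y : ip hzero y = C0.
Proof.
  assert (h : ip hzero y = Cadd (ip hzero y) (ip hzero y))
    by (rewrite <- ip_addl, hadd_0; reflexivity).
  ceq_from h.
Qed.
Lemma ip_0r y : ip y hzero = C0.
Proof. rewrite ip_conj, ip_0l. ceq. Qed.
Lemma ip_oppl x y : ip (hopp x) y = Copp (ip x y).
Proof.
  assert (h : Cadd (ip x y) (ip (hopp x) y) = C0)
    by (rewrite <- ip_addl, hadd_opp; apply ip_0l).
  ceq_from h.
Qed.
Lemma ip_oppr x y : ip x (hopp y) = Copp (ip x y).
Proof. rewrite ip_conj, ip_oppl, (ip_conj y x). ceq. Qed.

Ltac expand := unfold Defs.hsub in *;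
  repeat rewrite ?ip_addl, ?ip_addr, ?ip_scall, ?ip_scalr, ?ip_oppl, ?ip_oppr,
    ?ip_0l, ?ip_0r in *.

Lemma ip_sub_self_eq0 x y : ip (hsub x y) (hsub x y) = C0 -> x = y.
Proof. intros h. apply hsub_eq0, ip_self_eq0, h. Qed.

(* [x = y] follows from [<x - y, x - y> = 0], which expands to an identity of inner products. *)
Ltac veq := apply ip_sub_self_eq0; expand; ceq.

Lemma hscal_C0 x : hscal C0 x = hzero.
Proof. veq. Qed.
Lemma hopp_scal x : hopp x = hscal (Copp C1) x.
Proof. veq. Qed.

Definition normsq (x : H) : R := Re (ip x x).

Lemma normsq_ge0 x : 0 <= normsq x.
Proof. apply ip_self_Re_ge0. Qed.
Lemma ip_self x : ip x x = mkC (normsq x) 0.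
Proof. pose proof (f_equal Im (ip_conj x x)). apply C_ext; csimpl; [reflexivity|lra]. Qed.
Lemma normsq_eq0 x : normsq x = 0 -> x = hzero.
Proof. intros h; apply ip_self_eq0; rewrite ip_self, h; reflexivity. Qed.
Lemma normsq_0 : normsq hzero = 0.
Proof. unfold normsq; rewrite ip_0l; reflexivity. Qed.

Lemma normsq_add x y : normsq (hadd x y) = normsq x + normsq y + 2 * Re (ip x y).
Proof. unfold normsq. expand. rewrite (ip_conj x y). csimpl. ring. Qed.

Lemma normsq_scal a x : normsq (hscal a x) = cmod2 a * normsq x.
Proof. unfold normsq. expand. rewrite ip_self. unfold cmod2; csimpl. ring. Qed.

Lemma normsq_sub_le x y : normsq (hsub x y) <= 2 * normsq x + 2 * normsq y.
Proof.
  pose proof (normsq_ge0 (hadd x y)).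
  assert (normsq (hsub x y) + normsq (hadd x y) = 2 * normsq x + 2 * normsq y)
    by (unfold normsq; expand; csimpl; ring).
  lra.
Qed.

Lemma cauchy_schwarz2 x y : cmod2 (ip x y) <= normsq x * normsq y.
Proof.
  destruct (Rle_lt_or_eq_dec 0 (normsq y) (normsq_ge0 y)) as [hy|hy].
  - pose proof (normsq_ge0 (hsub (hscal (mkC (normsq y) 0) x) (hscal (ip x y) y))) as h.
    unfold normsq at 1 in h. expand.
    rewrite (ip_conj x y), (ip_self y), (ip_self x) in h. unfold cmod2. csimpl.
    apply Rmult_le_reg_l with (normsq y); nra.
  - rewrite <- hy, (normsq_eq0 y (eq_sym hy)), ip_0r.
    pose proof (normsq_ge0 x). unfold cmod2; csimpl; nra.
Qed.

Lemma hnorm_ge0 x : 0 <= hnorm x.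
Proof. apply sqrt_pos. Qed.
Lemma hnorm_sq x : hnorm x * hnorm x = normsq x.
Proof. apply sqrt_sqrt, normsq_ge0. Qed.

Lemma hnorm_le_of_sq x r : 0 <= r -> normsq x <= r * r -> hnorm x <= r.
Proof. intros h1 h2. pose proof (hnorm_sq x). pose proof (hnorm_ge0 x). nra. Qed.
Lemma hnorm_lt_of_sq x r : 0 < r -> normsq x < r * r -> hnorm x < r.
Proof. intros h1 h2. pose proof (hnorm_sq x). pose proof (hnorm_ge0 x). nra. Qed.

Lemma cauchy_schwarz x y : cmod (ip x y) <= hnorm x * hnorm y.
Proof.
  pose proof (hnorm_ge0 x); pose proof (hnorm_ge0 y).
  apply cmod_le_of_sq; [nra|].
  rewrite Rmult_assoc, (Rmult_comm (hnorm y)), Rmult_assoc, hnorm_sq, <- Rmult_assoc, hnorm_sq.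
  apply cauchy_schwarz2.
Qed.

Lemma hnorm_add x y : hnorm (hadd x y) <= hnorm x + hnorm y.
Proof.
  pose proof (hnorm_ge0 x); pose proof (hnorm_ge0 y).
  apply hnorm_le_of_sq; [lra|].
  pose proof (hnorm_sq x); pose proof (hnorm_sq y).
  pose proof (cauchy_schwarz x y); pose proof (Re_le_cmod (ip x y)).
  rewrite normsq_add. nra.
Qed.

Lemma hnorm_scal a x : hnorm (hscal a x) = cmod a * hnorm x.
Proof.
  unfold Defs.hnorm, cmod. fold (normsq (hscal a x)) (normsq x).
  rewrite normsq_scal. apply sqrt_mult; [apply cmod2_ge0|apply normsq_ge0].
Qed.

Lemma hnorm_sub_comm x y : hnorm (hsub x y) = hnorm (hsub y x).
Proof.
  unfold Defs.hnorm; f_equal. fold (normsq (hsub x y)) (normsq (hsub y x)).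
  unfold normsq; expand; csimpl; ring.
Qed.

Lemma hnorm_sub_triangle x y z : hnorm (hsub x z) <= hnorm (hsub x y) + hnorm (hsub y z).
Proof. replace (hsub x z) with (hadd (hsub x y) (hsub y z)) by veq. apply hnorm_add. Qed.

Lemma hnorm_sub_self x : hnorm (hsub x x) = 0.
Proof.
  unfold Defs.hnorm. fold (normsq (hsub x x)).
  replace (normsq (hsub x x)) with 0 by (unfold normsq; expand; csimpl; ring).
  apply sqrt_0.
Qed.

Lemma converges_iff u l : converges H u l <->
  forall eps, 0 < eps -> exists n0, forall n, (n0 <= n)%nat -> hnorm (hsub (u n) l) < eps.
Proof.
  unfold converges, Un_cv, R_dist.
  split; intros h eps he; destruct (h eps he) as [n0 hn0]; exists n0; intros n hn;
    specialize (hn0 n hn); pose proof (hnorm_ge0 (hsub (u n) l));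
    rewrite Rminus_0_r, Rabs_right in *; lra.
Qed.

Lemma converges_cauchy u l : converges H u l -> cauchy H u.
Proof.
  rewrite converges_iff. intros h eps he. destruct (h (eps / 2)) as [n0 hn0]; [lra|].
  exists n0. intros n m hn hm. pose proof (hn0 n hn); pose proof (hn0 m hm).
  pose proof (hnorm_sub_triangle (u n) l (u m)). rewrite (hnorm_sub_comm l) in *. lra.
Qed.

Lemma converges_add u v x y :
  converges H u x -> converges H v y -> converges H (fun n => hadd (u n) (v n)) (hadd x y).
Proof.
  rewrite !converges_iff. intros hu hv eps he.
  destruct (hu (eps / 2)) as [n1 h1]; [lra|]. destruct (hv (eps / 2)) as [n2 h2]; [lra|].
  exists (max n1 n2). intros n hn.
  specialize (h1 n ltac:(lia)). specialize (h2 n ltac:(lia)).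
  replace (hsub (hadd (u n) (v n)) (hadd x y)) with (hadd (hsub (u n) x) (hsub (v n) y))
    by veq.
  pose proof (hnorm_add (hsub (u n) x) (hsub (v n) y)). lra.
Qed.

Lemma converges_scal a u x :
  converges H u x -> converges H (fun n => hscal a (u n)) (hscal a x).
Proof.
  rewrite !converges_iff. intros hu eps he. pose proof (cmod_ge0 a).
  destruct (hu (eps / (cmod a + 1))) as [n0 h0]; [apply Rdiv_lt_0_compat; lra|].
  exists n0. intros n hn. specialize (h0 n hn).
  replace (hsub (hscal a (u n)) (hscal a x)) with (hscal a (hsub (u n) x)) by veq.
  rewrite hnorm_scal. pose proof (hnorm_ge0 (hsub (u n) x)).
  apply (Rmult_lt_compat_r (cmod a + 1)) in h0; [|lra].
  unfold Rdiv in h0. rewrite Rmult_assoc, Rinv_l in h0 by lra. nra.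
Qed.

Lemma converges_sub u v x y :
  converges H u x -> converges H v y -> converges H (fun n => hsub (u n) (v n)) (hsub x y).
Proof.
  intros hu hv.
  pose proof (converges_add _ _ _ _ hu (converges_scal (Copp C1) _ _ hv)) as h.
  eapply Un_cv_ext; [|exact h]. intros n; cbn beta. f_equal. f_equal; veq.
Qed.

Lemma ip_limit_eq a b u w x y : converges H u x -> converges H w y ->
  (forall n, ip a (u n) = ip b (w n)) -> ip a x = ip b y.
Proof.
  rewrite !converges_iff. intros hu hw e.
  set (K := hnorm a + hnorm b + 1).
  pose proof (hnorm_ge0 a); pose proof (hnorm_ge0 b).
  assert (hdiff : Cadd (ip a x) (Copp (ip b y)) = C0).
  { apply cmod_small_eq0. intros eps he.
    destruct (hu (eps / (2 * K))) as [n1 h1]; [apply Rdiv_lt_0_compat; unfold K; lra|].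
    destruct (hw (eps / (2 * K))) as [n2 h2]; [apply Rdiv_lt_0_compat; unfold K; lra|].
    set (n := max n1 n2). specialize (h1 n ltac:(lia)). specialize (h2 n ltac:(lia)).
    replace (Cadd (ip a x) (Copp (ip b y)))
      with (Cadd (ip a (hsub x (u n))) (ip b (hsub (w n) y))) by (expand; rewrite e; ceq).
    rewrite hnorm_sub_comm in h1.
    pose proof (cmod_add (ip a (hsub x (u n))) (ip b (hsub (w n) y))).
    pose proof (cauchy_schwarz a (hsub x (u n))); pose proof (cauchy_schwarz b (hsub (w n) y)).
    pose proof (hnorm_ge0 (hsub x (u n))); pose proof (hnorm_ge0 (hsub (w n) y)).
    assert (hK : eps / (2 * K) * K = eps / 2) by (field; unfold K; lra).
    assert (hnorm a * hnorm (hsub x (u n)) <= K * hnorm (hsub x (u n))) by (unfold K; nra).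
    assert (hnorm b * hnorm (hsub (w n) y) <= K * hnorm (hsub (w n) y)) by (unfold K; nra).
    assert (K * hnorm (hsub x (u n)) < eps / 2) by (rewrite <- hK; unfold K in *; nra).
    assert (K * hnorm (hsub (w n) y) < eps / 2) by (rewrite <- hK; unfold K in *; nra).
    lra. }
  ceq_from hdiff.
Qed.

Lemma normsq_dist_inf (M : H -> Prop) x : M hzero -> exists d,
  (forall m, M m -> d <= normsq (hsub x m)) /\
  (forall eps, 0 < eps -> exists m, M m /\ normsq (hsub x m) < d + eps).
Proof.
  intros hM0.
  set (E := fun r => exists m, M m /\ r = - normsq (hsub x m)).
  destruct (completeness E) as [s [hs1 hs2]].
  { exists 0. intros r [m [_ ->]]. pose proof (normsq_ge0 (hsub x m)). lra. }
  { exists (- normsq (hsub x hzero)), hzero. auto. }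
  exists (- s). split.
  - intros m hm. enough (- normsq (hsub x m) <= s) by lra. apply hs1. exists m; auto.
  - intros eps he. apply NNPP. intros hno.
    enough (s <= s - eps) by lra.
    apply hs2. intros r [m [hm ->]].
    destruct (Rlt_le_dec (normsq (hsub x m)) (- s + eps)); [|lra].
    exfalso; apply hno; exists m; auto.
Qed.

Lemma parallelogram x a b : normsq (hsub a b) =
  2 * normsq (hsub x a) + 2 * normsq (hsub x b)
  - 4 * normsq (hsub x (hscal (mkC (/ 2) 0) (hadd a b))).
Proof. unfold normsq. expand. csimpl. field. Qed.

Lemma minimizing_seq_cauchy (M : H -> Prop) x d mm :
  (forall a b, M a -> M b -> M (hscal (mkC (/ 2) 0) (hadd a b))) ->
  (forall m, M m -> d <= normsq (hsub x m)) ->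
  (forall n, M (mm n) /\ normsq (hsub x (mm n)) < d + / (INR n + 1)) ->
  cauchy H mm.
Proof.
  intros hmid hd hmm eps he.
  destruct (inv_succ_small (eps * eps / 4)) as [K hK]; [nra|].
  exists K. intros n k hn hk. apply hnorm_lt_of_sq; auto.
  rewrite (parallelogram x).
  pose proof (hd _ (hmid _ _ (proj1 (hmm n)) (proj1 (hmm k)))).
  pose proof (proj2 (hmm n)); pose proof (proj2 (hmm k)).
  pose proof (hK n hn); pose proof (hK k hk). lra.
Qed.

Lemma normsq_sub_limit_le x mm l d : converges H mm l ->
  (forall n, normsq (hsub x (mm n)) < d + / (INR n + 1)) -> normsq (hsub x l) <= d.
Proof.
  rewrite converges_iff. intros hl hmm.
  assert (hd : 0 <= d + 1).
  { pose proof (hmm 0%nat). pose proof (normsq_ge0 (hsub x (mm 0%nat))).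
    simpl in *. rewrite Rplus_0_l, Rinv_1 in *. lra. }
  apply le_of_le_add_eps. intros eta heta.
  set (delta := Rmin 1 (eta / (2 * d + 6))).
  assert (hdelta : 0 < delta) by (apply Rmin_pos; [lra|apply Rdiv_lt_0_compat; lra]).
  assert (hdelta1 : delta <= 1) by apply Rmin_l.
  assert (hdelta_eta : delta * (2 * d + 6) <= eta).
  { pose proof (Rmin_r 1 (eta / (2 * d + 6))) as h. fold delta in h.
    apply (Rmult_le_compat_r (2 * d + 6)) in h; [|lra].
    unfold Rdiv in h. rewrite Rmult_assoc, Rinv_l in h by lra. lra. }
  destruct (hl delta hdelta) as [K1 hK1].
  destruct (inv_succ_small delta hdelta) as [K2 hK2].
  set (n := max K1 K2).
  specialize (hK1 n ltac:(unfold n; lia)). specialize (hK2 n ltac:(unfold n; lia)).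
  pose proof (hnorm_sub_triangle x (mm n) l) as htri.
  pose proof (hmm n) as hq. rewrite <- hnorm_sq in hq.
  pose proof (hnorm_ge0 (hsub x (mm n))) as hq0.
  pose proof (hnorm_ge0 (hsub (mm n) l)) as ht0.
  pose proof (hnorm_ge0 (hsub x l)).
  set (q := hnorm (hsub x (mm n))) in *. set (t := hnorm (hsub (mm n) l)) in *.
  rewrite <- hnorm_sq.
  assert (q <= d + 2) by nra.
  assert (hnorm (hsub x l) * hnorm (hsub x l) <= (q + t) * (q + t)) by nra.
  nra.
Qed.

Lemma normsq_dist_attained (M : H -> Prop) x : linear_subspace H M -> closed_subset H M ->
  exists l, M l /\ forall m, M m -> normsq (hsub x l) <= normsq (hsub x m).
Proof.
  intros (hM0 & hMadd & hMsc) hMc.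
  destruct (normsq_dist_inf M x hM0) as [d [hd1 hd2]].
  assert (hseq : forall n : nat, exists m, M m /\ normsq (hsub x m) < d + / (INR n + 1)).
  { intros n. apply hd2, Rinv_0_lt_compat. pose proof (pos_INR n); lra. }
  destruct (choice _ hseq) as [mm hmm].
  assert (hcau : cauchy H mm).
  { apply (minimizing_seq_cauchy M x d); auto. }
  destruct (hilbert_complete mm hcau) as [l hl].
  exists l. split.
  - apply (hMc mm); auto. intros n; apply hmm.
  - intros m hm. apply Rle_trans with d; auto.
    apply (normsq_sub_limit_le x mm); auto. intros n; apply hmm.
Qed.

Lemma normsq_perturb x l y t : normsq (hsub x (hadd l (hscal (mkC t 0) y))) =
  normsq (hsub x l) - 2 * t * Re (ip (hsub x l) y) + t * t * normsq y.
Proof. unfold normsq. expand. rewrite (ip_conj x y), (ip_conj l y). csimpl. ring. Qed.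

Lemma minimizer_orth (M : H -> Prop) x l : linear_subspace H M -> M l ->
  (forall m, M m -> normsq (hsub x l) <= normsq (hsub x m)) ->
  forall y, M y -> ip (hsub x l) y = C0.
Proof.
  intros (_ & hMadd & hMsc) hl hmin.
  assert (hRe : forall y, M y -> Re (ip (hsub x l) y) = 0).
  { intros y hy.
    (* 2 t Re<x-l,y> <= t^2 |y|^2 for all real t forces Re<x-l,y> = 0 *)
    set (r := Re (ip (hsub x l) y)). set (t := r / (normsq y + 1)).
    pose proof (normsq_ge0 y).
    pose proof (hmin _ (hMadd _ _ hl (hMsc (mkC t 0) _ hy))) as h.
    rewrite normsq_perturb in h. fold r in h.
    assert (r = t * (normsq y + 1)) by (unfold t; field; lra).
    assert (t = 0) by nra. nra. }
  intros y hy. apply C_ext; [apply hRe; auto|].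
  pose proof (hRe _ (hMsc Ci _ hy)). expand. csimpl. lra.
Qed.

Lemma projection (M : H -> Prop) x : linear_subspace H M -> closed_subset H M ->
  exists m, M m /\ forall y, M y -> ip (hsub x m) y = C0.
Proof.
  intros hlin hcl. destruct (normsq_dist_attained M x hlin hcl) as [l [hl hmin]].
  exists l. split; auto. apply (minimizer_orth M); auto.
Qed.

Lemma orth_complement_trivial (M : H -> Prop) : linear_subspace H M -> closed_subset H M ->
  (forall h, (forall m, M m -> ip h m = C0) -> h = hzero) -> forall x, M x.
Proof.
  intros hlin hcl hperp x. destruct (projection M x hlin hcl) as [m [hm horth]].
  rewrite (hsub_eq0 x m); auto.
Qed.

Definition closure (P : H -> Prop) (x : H) : Prop :=
  forall eps, 0 < eps -> exists y, P y /\ hnorm (hsub x y) < eps.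

Lemma closure_linear P : linear_subspace H P -> linear_subspace H (closure P).
Proof.
  intros (h0 & hadd' & hsc). split; [|split].
  - intros eps he. exists hzero. split; auto. rewrite hnorm_sub_self. exact he.
  - intros x1 x2 h1 h2 eps he.
    destruct (h1 (eps / 2)) as [y1 [hy1 n1]]; [lra|].
    destruct (h2 (eps / 2)) as [y2 [hy2 n2]]; [lra|].
    exists (hadd y1 y2). split; auto.
    replace (hsub (hadd x1 x2) (hadd y1 y2)) with (hadd (hsub x1 y1) (hsub x2 y2)) by veq.
    pose proof (hnorm_add (hsub x1 y1) (hsub x2 y2)). lra.
  - intros a x h1 eps he. pose proof (cmod_ge0 a).
    destruct (h1 (eps / (cmod a + 1))) as [y [hy n1]]; [apply Rdiv_lt_0_compat; lra|].
    exists (hscal a y). split; auto.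
    replace (hsub (hscal a x) (hscal a y)) with (hscal a (hsub x y)) by veq.
    rewrite hnorm_scal. pose proof (hnorm_ge0 (hsub x y)).
    apply (Rmult_lt_compat_r (cmod a + 1)) in n1; [|lra].
    unfold Rdiv in n1. rewrite Rmult_assoc, Rinv_l in n1 by lra. nra.
Qed.

Lemma closure_closed P : closed_subset H (closure P).
Proof.
  intros uu l hu hc eps he. rewrite converges_iff in hc.
  destruct (hc (eps / 2)) as [n0 hn0]; [lra|]. specialize (hn0 n0 (le_n _)).
  destruct (hu n0 (eps / 2)) as [y [hy n1]]; [lra|].
  exists y. split; auto.
  pose proof (hnorm_sub_triangle l (uu n0) y). rewrite hnorm_sub_comm in hn0. lra.
Qed.

Lemma dense_of_orth_trivial P : linear_subspace H P ->
  (forall h, (forall x, P x -> ip x h = C0) -> h = hzero) -> dense H P.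
Proof.
  intros hlin hperp x.
  apply (orth_complement_trivial _ (closure_linear P hlin) (closure_closed P)).
  intros h horth. apply hperp. intros y hy. rewrite ip_conj, horth; [ceq|].
  intros eps he. exists y. split; auto. rewrite hnorm_sub_self. exact he.
Qed.

Section SelfAdjoint.
Variable A : Op H.
Hypothesis HA : self_adjoint H A.
Notation Ap := (app H A).
Notation DA := (dom H A).

Lemma dom_0 : DA hzero.
Proof. destruct HA as ((h&_)&_); apply h. Qed.
Lemma dom_add x y : DA x -> DA y -> DA (hadd x y).
Proof. destruct HA as ((h&_)&_); apply h. Qed.
Lemma dom_scal a x : DA x -> DA (hscal a x).
Proof. destruct HA as ((h&_)&_); apply h. Qed.
Lemma A_add x y : DA x -> DA y -> Ap (hadd x y) = hadd (Ap x) (Ap y).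
Proof. destruct HA as ((_&h&_)&_); apply h. Qed.
Lemma A_scal a x : DA x -> Ap (hscal a x) = hscal a (Ap x).
Proof. destruct HA as ((_&_&h)&_); apply h. Qed.
Lemma adj_rel_A y z : adj_rel H A y z -> DA y /\ z = Ap y.
Proof. destruct HA as (_&_&h); apply h. Qed.
Lemma A_sym x y : DA x -> DA y -> ip (Ap x) y = ip x (Ap y).
Proof. intros hx hy. destruct HA as (_&_&h). apply (proj2 (h y (Ap y))); auto. Qed.

Lemma dom_sub x y : DA x -> DA y -> DA (hsub x y).
Proof. intros hx hy. unfold Defs.hsub. rewrite hopp_scal. apply dom_add, dom_scal; auto. Qed.
Lemma A_0 : Ap hzero = hzero.
Proof.
  transitivity (Ap (hscal C0 hzero)); [f_equal; symmetry; apply hscal_C0|].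
  rewrite A_scal by apply dom_0. apply hscal_C0.
Qed.
Lemma A_sub x y : DA x -> DA y -> Ap (hsub x y) = hsub (Ap x) (Ap y).
Proof.
  intros hx hy. unfold Defs.hsub. rewrite !hopp_scal, A_add, A_scal; auto.
  apply dom_scal; auto.
Qed.

Lemma Im_ip_A_self x : DA x -> Im (ip (Ap x) x) = 0.
Proof.
  intros hx. pose proof (A_sym x x hx hx) as h. rewrite (ip_conj (Ap x) x) in h.
  pose proof (f_equal Im h). csimpl. lra.
Qed.

Lemma A_closed u x y : (forall n, DA (u n)) -> converges H u x ->
  converges H (fun n => Ap (u n)) y -> DA x /\ Ap x = y.
Proof.
  intros hd hu hAu.
  enough (adj_rel H A x y) as h by (destruct (adj_rel_A _ _ h); auto).
  intros v hv. apply (ip_limit_eq _ _ _ _ _ _ hu hAu). intros n. apply A_sym; auto.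
Qed.

Definition shift (b : R) (u : H) : H := hsub (Ap u) (hscal (mkC 0 b) u).

Lemma normsq_shift_ge b w : DA w -> b * b * normsq w <= normsq (shift b w).
Proof.
  intros hw. pose proof (normsq_ge0 (Ap w)). pose proof (Im_ip_A_self w hw).
  pose proof (A_sym w w hw hw). unfold shift, normsq in *. expand.
  rewrite (ip_conj (Ap w) w). csimpl. nra.
Qed.

Lemma shift_sub b x y : DA x -> DA y -> shift b (hsub x y) = hsub (shift b x) (shift b y).
Proof. intros hx hy. unfold shift. rewrite A_sub by auto. veq. Qed.

Definition shift_range (b : R) (y : H) : Prop := exists u, DA u /\ y = shift b u.

Lemma shift_range_linear b : linear_subspace H (shift_range b).
Proof.
  unfold shift_range, shift. split; [|split].
  - exists hzero. split; [apply dom_0|]. rewrite A_0. veq.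
  - intros y1 y2 [u1 [h1 ->]] [u2 [h2 ->]]. exists (hadd u1 u2).
    split; [apply dom_add; auto|]. rewrite A_add; auto. veq.
  - intros a y1 [u1 [h1 ->]]. exists (hscal a u1).
    split; [apply dom_scal; auto|]. rewrite A_scal; auto. veq.
Qed.

(* A - ibI is bounded below by |b|, so preimages of a Cauchy sequence are Cauchy,
   and closedness of A identifies the limit. *)
Lemma shift_range_closed b : b <> 0 -> closed_subset H (shift_range b).
Proof.
  intros hb yy y hyy hconv.
  destruct (choice _ hyy) as [uu huu].
  assert (hcau : cauchy H uu).
  { intros eps he. pose proof (Rabs_pos_lt b hb).
    destruct (converges_cauchy _ _ hconv (eps * Rabs b)) as [n0 hn0]; [nra|].
    exists n0. intros n m hn hm. specialize (hn0 n m hn hm).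
    destruct (huu n) as [hdn en]; destruct (huu m) as [hdm em].
    rewrite en, em, <- shift_sub in hn0 by auto.
    pose proof (normsq_shift_ge b (hsub (uu n) (uu m)) ltac:(apply dom_sub; auto)) as h.
    rewrite <- !hnorm_sq in h.
    pose proof (hnorm_ge0 (hsub (uu n) (uu m))).
    pose proof (hnorm_ge0 (shift b (hsub (uu n) (uu m)))).
    replace (b * b) with (Rabs b * Rabs b) in h by (rewrite <- Rabs_mult, Rabs_right; nra).
    assert (Rabs b * hnorm (hsub (uu n) (uu m)) <= hnorm (shift b (hsub (uu n) (uu m)))) by nra.
    nra. }
  destruct (hilbert_complete uu hcau) as [l hl].
  assert (hAu : converges H (fun n => Ap (uu n)) (hadd y (hscal (mkC 0 b) l))).
  { pose proof (converges_add _ _ _ _ hconv (converges_scal (mkC 0 b) _ _ hl)) as hc.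
    eapply Un_cv_ext; [|exact hc]. intros n; simpl.
    destruct (huu n) as [_ ->]. unfold shift. do 2 f_equal. veq. }
  destruct (A_closed uu l _ (fun n => proj1 (huu n)) hl hAu) as [hdl hAl].
  exists l. split; auto. unfold shift. rewrite hAl. veq.
Qed.

Lemma shift_range_orth_trivial b : b <> 0 ->
  forall h, (forall y, shift_range b y -> ip h y = C0) -> h = hzero.
Proof.
  intros hb h horth.
  assert (hadj : adj_rel H A h (hscal (mkC 0 (- b)) h)).
  { intros v hv. pose proof (horth (shift b v) ltac:(exists v; auto)) as e.
    rewrite ip_conj in e. unfold shift in e. expand. ceq_from e. }
  destruct (adj_rel_A _ _ hadj) as [hdh hAh].
  pose proof (Im_ip_A_self h hdh) as e. rewrite <- hAh in e. expand.
  rewrite ip_self in e. csimpl.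
  apply normsq_eq0. nra.
Qed.

Lemma shift_surj b : b <> 0 -> forall h, exists u, DA u /\ shift b u = h.
Proof.
  intros hb h.
  destruct (orth_complement_trivial _ (shift_range_linear b) (shift_range_closed b hb)
              (shift_range_orth_trivial b hb) h) as [u [hu ->]].
  exists u; auto.
Qed.

Lemma minus_i_surj h : exists u, DA u /\ hsub (Ap u) (hscal Ci u) = h.
Proof. apply (shift_surj 1). lra. Qed.
Lemma plus_i_surj h : exists u, DA u /\ hadd (Ap u) (hscal Ci u) = h.
Proof.
  destruct (shift_surj (-1) ltac:(lra) h) as [u [hu <-]].
  exists u; split; auto. unfold shift. veq.
Qed.

Section Cayley.
Variable U : H -> H.
Hypothesis HU : is_cayley H A U.

Notation Ui n := (Nat.iter n U).

Lemma U_add p q : U (hadd p q) = hadd (U p) (U q).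
Proof.
  destruct (minus_i_surj p) as [u [hu <-]]. destruct (minus_i_surj q) as [v [hv <-]].
  replace (hadd (hsub (Ap u) (hscal Ci u)) (hsub (Ap v) (hscal Ci v)))
    with (hsub (Ap (hadd u v)) (hscal Ci (hadd u v))) by (rewrite A_add; auto; veq).
  rewrite !HU, A_add by (auto; apply dom_add; auto). veq.
Qed.

Lemma U_scal a p : U (hscal a p) = hscal a (U p).
Proof.
  destruct (minus_i_surj p) as [u [hu <-]].
  replace (hscal a (hsub (Ap u) (hscal Ci u)))
    with (hsub (Ap (hscal a u)) (hscal Ci (hscal a u))) by (rewrite A_scal; auto; veq).
  rewrite !HU, A_scal by (auto; apply dom_scal; auto). veq.
Qed.

Lemma U_ip p q : ip (U p) (U q) = ip p q.
Proof.
  destruct (minus_i_surj p) as [u [hu <-]]. destruct (minus_i_surj q) as [v [hv <-]].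
  rewrite !HU by auto. expand. rewrite (A_sym u v hu hv). ceq.
Qed.

Lemma U_normsq p : normsq (U p) = normsq p.
Proof. unfold normsq; rewrite U_ip; reflexivity. Qed.

Lemma U_inj p q : U p = U q -> p = q.
Proof.
  intros e. apply ip_sub_self_eq0. rewrite <- U_ip.
  unfold Defs.hsub. rewrite !hopp_scal, !U_add, !U_scal, e. expand. ceq.
Qed.

Lemma U_surj y : exists p, U p = y.
Proof.
  destruct (plus_i_surj y) as [u [hu <-]].
  exists (hsub (Ap u) (hscal Ci u)). apply HU; auto.
Qed.

Lemma Ui_add n p q : Ui n (hadd p q) = hadd (Ui n p) (Ui n q).
Proof. induction n; simpl; auto. rewrite IHn, U_add; auto. Qed.
Lemma Ui_scal n a p : Ui n (hscal a p) = hscal a (Ui n p).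
Proof. induction n; simpl; auto. rewrite IHn, U_scal; auto. Qed.
Lemma Ui_ip n p q : ip (Ui n p) (Ui n q) = ip p q.
Proof. induction n; simpl; auto. rewrite U_ip; auto. Qed.
Lemma Ui_normsq n p : normsq (Ui n p) = normsq p.
Proof. unfold normsq; rewrite Ui_ip; reflexivity. Qed.
Lemma hnorm_Ui n p : hnorm (Ui n p) = hnorm p.
Proof. unfold Defs.hnorm. fold (normsq (Ui n p)) (normsq p). rewrite Ui_normsq. reflexivity. Qed.

Section Restriction.
Variable L : H -> Prop.
Hypothesis HL1 : linear_subspace H L.
Hypothesis HL2 : closed_subset H L.
Notation SL := (S_L H A L).

Lemma orth_orth_sub y : (forall f, (forall g, L g -> ip f g = C0) -> ip f y = C0) -> L y.
Proof.
  intros h. destruct (projection L y HL1 HL2) as [p [hp horth]].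
  assert (e : hsub y p = hzero).
  { apply ip_self_eq0.
    replace (ip (hsub y p) (hsub y p))
      with (Cadd (ip (hsub y p) y) (Copp (ip (hsub y p) p))) by (expand; ceq).
    rewrite (h _ horth), (horth p hp). ceq. }
  rewrite (hsub_eq0 y p e); auto.
Qed.

Lemma SL_linear : linear_op H SL.
Proof.
  split; [split; [|split]|split]; cbn.
  - split; [apply dom_0|]. intros g _. rewrite A_0. expand. ceq.
  - intros x y [hx px] [hy py]. split; [apply dom_add; auto|]. intros g hg.
    rewrite A_add by auto.
    specialize (px g hg); specialize (py g hg). expand.
    apply C_ext; cparts px; cparts py; csimpl; lra.
  - intros a x [hx px]. split; [apply dom_scal; auto|]. intros g hg.
    rewrite A_scal by auto. specialize (px g hg). expand. ceq_from px.
  - intros x y [hx _] [hy _]. apply A_add; auto.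
  - intros a x [hx _]. apply A_scal; auto.
Qed.

Lemma SL_symmetric : symmetric H SL.
Proof. intros x y [hx _] [hy _]. apply A_sym; auto. Qed.

Lemma SL_closed : closed_op H SL.
Proof.
  intros u x y hu hc hAc.
  destruct (A_closed u x y (fun n => proj1 (hu n)) hc hAc) as [hx hAx].
  split; [|exact hAx]. split; auto. intros g hg.
  assert (e : ip g (hsub (Ap x) (hscal Ci x)) = ip hzero x).
  { apply (ip_limit_eq _ _ (fun n => hsub (Ap (u n)) (hscal Ci (u n))) u); auto.
    - rewrite hAx. apply converges_sub; auto.
      eapply Un_cv_ext; [|apply (converges_scal Ci _ _ hc)]. reflexivity.
    - intros n. rewrite ip_0l, ip_conj, (proj2 (hu n) g hg). ceq. }
  rewrite ip_conj, e, ip_0l. ceq.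
Qed.

Lemma L_sub_defect_minus_i g : L g -> defect H SL (Copp Ci) g.
Proof.
  intros hg x [hx hp]. specialize (hp g hg). cbn. expand. ceq_from hp.
Qed.

Lemma defect_minus_i_sub_L y : defect H SL (Copp Ci) y -> L y.
Proof.
  intros hy. apply orth_orth_sub. intros f hf.
  destruct (minus_i_surj f) as [x [hx <-]].
  specialize (hy x (conj hx hf)). cbn in hy. expand. ceq_from hy.
Qed.

Lemma U_L_sub_defect_i g : L g -> defect H SL Ci (U g).
Proof.
  intros hg x [hx hp]. specialize (hp g hg).
  rewrite <- U_ip, HU in hp by auto. cbn. expand. ceq_from hp.
Qed.

Lemma defect_i_sub_U_L y : defect H SL Ci y -> exists g, L g /\ y = U g.
Proof.
  intros hy. destruct (U_surj y) as [p <-]. exists p. split; auto.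
  apply orth_orth_sub. intros f hf.
  destruct (minus_i_surj f) as [x [hx <-]].
  specialize (hy x (conj hx hf)). cbn in hy.
  rewrite <- U_ip, HU by auto. expand. ceq_from hy.
Qed.

(* [U] maps [L = ker(S* + iI)] onto [ker(S* - iI)]; its inverse is the required isometry. *)
Lemma SL_equal_nonzero_defects : (exists g, L g /\ g <> hzero) -> equal_nonzero_defects H SL.
Proof.
  intros [g [hg hg0]]. split.
  - exists (U g). split; [apply U_L_sub_defect_i; auto|].
    intros e. apply hg0, normsq_eq0. rewrite <- U_normsq, e. apply normsq_0.
  - destruct (choice _ U_surj) as [V hV].
    exists V. split; [|split].
    + intros x hx. destruct (defect_i_sub_U_L x hx) as [g' [hg' ->]].
      apply L_sub_defect_minus_i. rewrite (U_inj _ _ (hV (U g'))). exact hg'.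
    + intros x y _ _. rewrite <- U_ip, !hV. reflexivity.
    + intros y hy. exists (U y). split.
      * apply U_L_sub_defect_i, defect_minus_i_sub_L, hy.
      * apply U_inj, hV.
Qed.

Section Wandering.
Hypothesis HW : wandering H U L.

Lemma wandering_orth m g g' : (1 <= m)%nat -> L g -> L g' -> ip (Ui m g) g' = C0.
Proof. intros hm hg hg'. apply (HW m hm (Ui m g) g'); eauto. Qed.

(* Pairing the defect equation of [z] with [x], where [(A - iI)x = U^m g]
   and [(A + iI)x = U^(m+1) g]. *)
Lemma defect_UnL_step nu z m g : defect H SL nu z -> (1 <= m)%nat -> L g ->
  Cmul (Cadd (Cconj nu) Ci) (ip (Ui m g) z) =
  Cmul (Cadd (Cconj nu) (Copp Ci)) (ip (Ui (S m) g) z).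
Proof.
  intros hz hm hg. destruct (minus_i_surj (Ui m g)) as [x [hx e]].
  assert (hxS : dom H SL x) by (split; auto; rewrite e; intros; apply wandering_orth; auto).
  specialize (hz x hxS). cbn in hz.
  assert (e2 : Ui (S m) g = hadd (Ap x) (hscal Ci x)) by (simpl; rewrite <- e; apply HU; auto).
  rewrite e2, <- e. expand. rewrite hz. ceq.
Qed.

Lemma defect_lower_orth_UnL nu z k g : Im nu < 0 -> defect H SL nu z ->
  (1 <= k)%nat -> L g -> ip (Ui k g) z = C0.
Proof.
  intros hnu hz hk hg. rewrite <- (Nat.add_0_r k).
  apply (bounded_ratio_seq_eq0 (fun j => ip (Ui (k + j) g) z)
           (Cadd (Cconj nu) Ci) (Cadd (Cconj nu) (Copp Ci)) (normsq g * normsq z)).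
  - unfold cmod2; csimpl. nra.
  - intros j. rewrite <- (Ui_normsq (k + j) g). apply cauchy_schwarz2.
  - intros j. replace (k + S j)%nat with (S (k + j)) by lia.
    apply defect_UnL_step; auto. lia.
Qed.

Lemma defects_orth lam nu : 0 < Im lam -> Im nu < 0 ->
  orth H (defect H SL lam) (defect H SL nu).
Proof.
  intros hl hn y z hy hz.
  destruct (choice _ U_surj) as [V hV].
  set (zs := fun j => Nat.iter j V z).
  assert (hzs : forall j, Ui j (zs j) = z).
  { induction j; auto. unfold zs in *.
    rewrite Nat.iter_succ_r, Nat.iter_succ, hV. exact IHj. }
  assert (hperp : forall j, (1 <= j)%nat -> forall g, L g -> ip (zs j) g = C0).
  { intros j hj g hg. rewrite <- (Ui_ip j), hzs, ip_conj, (defect_lower_orth_UnL nu); auto.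
    ceq. }
  assert (hstep : forall j, Cmul (Cadd (Cconj lam) (Copp Ci)) (ip (zs j) y) =
                            Cmul (Cadd (Cconj lam) Ci) (ip (zs (S j)) y)).
  { intros j. destruct (minus_i_surj (zs (S j))) as [x [hx e]].
    assert (hxS : dom H SL x)
      by (split; auto; rewrite e; intros; apply hperp; auto; lia).
    specialize (hy x hxS). cbn in hy.
    assert (e2 : zs j = hadd (Ap x) (hscal Ci x))
      by (rewrite <- HU, e by auto; unfold zs; simpl; rewrite hV; reflexivity).
    rewrite e2, <- e. expand. rewrite hy. ceq. }
  assert (hzy : ip z y = C0).
  { apply (bounded_ratio_seq_eq0 (fun j => ip (zs j) y)
             (Cadd (Cconj lam) (Copp Ci)) (Cadd (Cconj lam) Ci) (normsq z * normsq y)).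
    - unfold cmod2; csimpl. nra.
    - intros j. rewrite <- (hzs j), Ui_normsq. apply cauchy_schwarz2.
    - exact hstep. }
  rewrite ip_conj, hzy. ceq.
Qed.

Fixpoint orbit_sum (u : H) (n : nat) : H :=
  match n with O => hzero | S n => hadd (orbit_sum u n) (Ui n u) end.

Lemma orbit_sum_orth u n m : L u -> (n <= m)%nat -> ip (orbit_sum u n) (Ui m u) = C0.
Proof.
  intros hu. induction n; intros hnm; simpl; [apply ip_0l|].
  rewrite ip_addl, IHn by lia.
  replace m with (n + (m - n))%nat by lia. rewrite Nat.iter_add, Ui_ip.
  rewrite ip_conj, wandering_orth by (auto; lia). ceq.
Qed.

Lemma normsq_orbit_sum u n : L u -> normsq (orbit_sum u n) = INR n * normsq u.
Proof.
  intros hu. induction n; simpl orbit_sum; [rewrite normsq_0; simpl; ring|].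
  rewrite normsq_add, IHn, orbit_sum_orth, Ui_normsq, S_INR by auto. simpl. ring.
Qed.

Lemma orbit_sum_telescope u w n : hsub (U w) w = hscal (mkC 0 2) u ->
  hscal (mkC 0 2) (orbit_sum u n) = hsub (Ui n w) w.
Proof.
  intros e. induction n; simpl orbit_sum; [simpl; veq|].
  assert (eU : U w = hadd w (hscal (mkC 0 2) u)) by (rewrite <- e; veq).
  rewrite Nat.iter_succ_r, eU, Ui_add, Ui_scal.
  assert (en : Ui n w = hadd (hscal (mkC 0 2) (orbit_sum u n)) w) by (rewrite IHn; veq).
  rewrite en. veq.
Qed.

(* [n |u|^2 = |orbit_sum u n|^2 = |U^n w - w|^2 / 4 <= |w|^2] for every [n]. *)
Lemma wandering_range_trivial u w : L u -> hsub (U w) w = hscal (mkC 0 2) u -> u = hzero.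
Proof.
  intros hu e.
  assert (hb : forall n, INR n * normsq u <= normsq w).
  { intros n. pose proof (f_equal normsq (orbit_sum_telescope u w n e)) as t.
    rewrite normsq_scal, normsq_orbit_sum in t by auto.
    pose proof (normsq_sub_le (Ui n w) w). rewrite Ui_normsq in *.
    unfold cmod2 in t; csimpl. lra. }
  apply normsq_eq0. apply Rle_antisym; [|apply normsq_ge0].
  apply le_of_le_add_eps. intros eta heta.
  pose proof (normsq_ge0 w); pose proof (normsq_ge0 u).
  destruct (inv_succ_small (eta / (normsq w + 1))) as [K hK]; [apply Rdiv_lt_0_compat; lra|].
  specialize (hK K (le_n _)). specialize (hb (S K)). rewrite S_INR in hb.
  pose proof (pos_INR K).
  assert (hr : / (INR K + 1) * (INR K + 1) = 1) by (field; lra).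
  assert (hq : eta / (normsq w + 1) * (normsq w + 1) = eta) by (field; lra).
  assert (0 < / (INR K + 1)) by (apply Rinv_0_lt_compat; lra).
  assert (normsq u <= / (INR K + 1) * normsq w) by nra.
  assert (/ (INR K + 1) * normsq w <= eta / (normsq w + 1) * (normsq w + 1)) by nra.
  lra.
Qed.

Lemma orth_dom_SL_trivial h : (forall x, dom H SL x -> ip x h = C0) -> h = hzero.
Proof.
  intros hh. destruct (plus_i_surj h) as [u [hu eh]].
  assert (hLu : L u).
  { apply orth_orth_sub. intros f hf. destruct (minus_i_surj f) as [x [hx <-]].
    specialize (hh x (conj hx hf)). rewrite <- eh in hh. expand.
    rewrite <- (A_sym x u hx hu) in hh. ceq_from hh. }
  assert (e : hsub (U (hsub (Ap u) (hscal Ci u))) (hsub (Ap u) (hscal Ci u))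
              = hscal (mkC 0 2) u) by (rewrite HU by auto; veq).
  rewrite <- eh, (wandering_range_trivial u _ hLu e), A_0. veq.
Qed.

Lemma SL_dense : densely_defined H SL.
Proof. apply dense_of_orth_trivial; [apply SL_linear|apply orth_dom_SL_trivial]. Qed.

Lemma SL_PSO_of_wandering : (exists g, L g /\ g <> hzero) -> is_PSO H SL.
Proof.
  intros hne.
  exact (conj SL_linear (conj SL_dense (conj SL_symmetric (conj SL_closed
           (conj (SL_equal_nonzero_defects hne) defects_orth))))).
Qed.

End Wandering.

(* For [0 < s < 1] the point [mu = i (1 + s) / (1 - s)] has Cayley image [s^-1];
   solving [(A - mu I) v = (1 - s)^-1 g] gives [p = (A - iI) v] with [p - s U p = g]
   and [U p] in [ker(S* - mu I)]. *)
Lemma resolvent_defect s g : 0 < s < 1 -> L g -> exists p,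
  hsub p (hscal (mkC s 0) (U p)) = g /\ defect H SL (mkC 0 ((1 + s) / (1 - s))) (U p).
Proof.
  intros hs hg. set (b := (1 + s) / (1 - s)).
  assert (hb : 1 - s <> 0) by lra.
  destruct (shift_surj b ltac:(unfold b; apply Rgt_not_eq, Rdiv_lt_0_compat; lra)
              (hscal (mkC (/ (1 - s)) 0) g)) as [v [hv ev]].
  assert (eg : g = hscal (mkC (1 - s) 0) (shift b v)).
  { rewrite ev. apply ip_sub_self_eq0; expand; apply C_ext; csimpl; field; auto. }
  assert (hgv : L (shift b v)) by (rewrite ev; apply HL1; auto).
  exists (hsub (Ap v) (hscal Ci v)). rewrite (HU v hv). split.
  - rewrite eg. unfold shift. apply ip_sub_self_eq0; expand; apply C_ext; csimpl;
      unfold b; field; auto.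
  - intros x [hx hp]. specialize (hp _ hgv). cbn. unfold shift in hp.
    expand. rewrite <- (A_sym x v hx hv) in hp |- *. ceq_from hp.
Qed.

Lemma hnorm_resolvent_le s g p : 0 <= s <= 1 / 2 ->
  hsub p (hscal (mkC s 0) (U p)) = g -> hnorm p <= 2 * hnorm g.
Proof.
  intros hs e.
  assert (ep : p = hadd g (hscal (mkC s 0) (U p))) by (rewrite <- e; veq).
  pose proof (hnorm_add g (hscal (mkC s 0) (U p))) as h.
  rewrite <- ep, hnorm_scal, cmod_real, Rabs_right in h by lra.
  replace (hnorm (U p)) with (hnorm p) in h by (symmetry; apply (hnorm_Ui 1)).
  pose proof (hnorm_ge0 p). nra.
Qed.

Lemma resolvent_iterate s g p j : hsub p (hscal (mkC s 0) (U p)) = g ->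
  Ui j p = hadd (Ui j g) (hscal (mkC s 0) (Ui (S j) p)).
Proof.
  intros e. assert (ep : p = hadd g (hscal (mkC s 0) (U p))) by (rewrite <- e; veq).
  rewrite ep at 1. rewrite Ui_add, Ui_scal, Nat.iter_succ_r. reflexivity.
Qed.

Section PhillipsOrth.
Hypothesis HO : forall lam nu, 0 < Im lam -> Im nu < 0 ->
  orth H (defect H SL lam) (defect H SL nu).

Lemma resolvent_orth s g : 0 < s < 1 -> L g -> exists p,
  hsub p (hscal (mkC s 0) (U p)) = g /\ forall g', L g' -> ip (U p) g' = C0.
Proof.
  intros hs hg. destruct (resolvent_defect s g hs hg) as [p [e hd]].
  exists p. split; auto. intros g' hg'.
  apply (HO (mkC 0 ((1 + s) / (1 - s))) (Copp Ci)); auto.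
  - cbn. apply Rdiv_lt_0_compat; lra.
  - cbn. lra.
  - apply L_sub_defect_minus_i; auto.
Qed.

Definition resolvent_iterates_orth (j : nat) : Prop :=
  forall s g p, 0 < s < 1 -> L g -> hsub p (hscal (mkC s 0) (U p)) = g ->
  (forall g', L g' -> ip (U p) g' = C0) -> forall g', L g' -> ip (Ui j p) g' = C0.

(* [<U^j g, g'> = - s <U^(j+1) p, g'>] is [O(s)], and [s] can be taken arbitrarily small. *)
Lemma iterate_orth_of_resolvent j : resolvent_iterates_orth j ->
  forall g g', L g -> L g' -> ip (Ui j g) g' = C0.
Proof.
  intros hP g g' hg hg'. apply cmod_small_eq0. intros eps he.
  set (K := hnorm g * hnorm g' + 1).
  pose proof (hnorm_ge0 g); pose proof (hnorm_ge0 g').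
  assert (hK : 0 < K) by (unfold K; nra).
  set (s := Rmin (1 / 2) (eps / (4 * K))).
  assert (hs0 : 0 < s) by (apply Rmin_pos; [lra|apply Rdiv_lt_0_compat; lra]).
  assert (hs1 : s <= 1 / 2) by apply Rmin_l.
  assert (hs_eps : s * (4 * K) <= eps).
  { pose proof (Rmin_r (1 / 2) (eps / (4 * K))) as h. fold s in h.
    apply (Rmult_le_compat_r (4 * K)) in h; [|lra].
    unfold Rdiv in h. rewrite Rmult_assoc, Rinv_l in h by lra. lra. }
  destruct (resolvent_orth s g ltac:(lra) hg) as [p [e ho]].
  pose proof (hP s g p ltac:(lra) hg e ho g' hg') as h0.
  rewrite (resolvent_iterate s g p j e), ip_addl, ip_scall in h0.
  assert (ec : ip (Ui j g) g' = Copp (Cmul (mkC s 0) (ip (Ui (S j) p) g'))) by ceq_from h0.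
  rewrite ec, cmod_opp, cmod_mul, cmod_real, Rabs_right by lra.
  pose proof (cauchy_schwarz (Ui (S j) p) g') as hcs. rewrite hnorm_Ui in hcs.
  pose proof (hnorm_resolvent_le s g p ltac:(lra) e).
  pose proof (hnorm_ge0 p).
  assert (cmod (ip (Ui (S j) p) g') <= 2 * K) by (unfold K in *; nra).
  nra.
Qed.

Lemma resolvent_iterates_orth_S j : resolvent_iterates_orth j -> resolvent_iterates_orth (S j).
Proof.
  intros hP s g p hs hg e ho g' hg'.
  pose proof (hP s g p hs hg e ho g' hg') as h0.
  rewrite (resolvent_iterate s g p j e), ip_addl, ip_scall,
    (iterate_orth_of_resolvent j hP g g' hg hg') in h0.
  apply C_ext; cparts h0; csimpl; nra.
Qed.

Lemma wandering_of_PSO_orth : wandering H U L.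
Proof.
  assert (hP : forall j, resolvent_iterates_orth (S j)).
  { induction j; [intros s g p _ _ _ ho; exact ho|]. apply resolvent_iterates_orth_S; auto. }
  intros [|n] hn x y [g [hg ->]] hy; [lia|]. apply (iterate_orth_of_resolvent (S n)); auto.
Qed.

End PhillipsOrth.
End Restriction.
End Cayley.
End SelfAdjoint.
End Hilbert.

Theorem theorem5p2 (H : Hilbert) (A : Op H) (U : H -> H) (L : H -> Prop) :
  self_adjoint H A -> is_cayley H A U ->
  linear_subspace H L -> closed_subset H L -> (exists g, L g /\ g <> hzero H) ->
  (is_PSO H (S_L H A L) <-> wandering H U L).
Proof.
  intros hA hU hL1 hL2 hne. split.
  - intros (_ & _ & _ & _ & _ & horth).
    exact (wandering_of_PSO_orth H (hilbert_ax H) A hA U hU L hL1 horth).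
  - intros hW.
    exact (SL_PSO_of_wandering H (hilbert_ax H) A hA U hU L hL1 hL2 hW hne).
Qed.
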